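(* Both $IIS$ and head spine $SII$ absorb call-by-name $III$: for every term $M$, $IIS(III(M)) = IIS(M)$ and $SII(III(M))=SII(M)$ (equality of partial functions: either both sides are undefined or both are defined and equal).
   Context: Terms: $\Lambda ::= x\mid\lambda x.\Lambda\mid\Lambda\Lambda$; $[N/x]B$ is capture-avoiding substitution. An evaluator is a partial function $\Lambda\rightharpoonup\Lambda$ defined by inference rules, undefined (divergent) where no finite derivation exists; $\mathrm{id}$ is the identity; composition $e_2\circ e_1$ is undefined where $e_1$ is. Eval-apply template: given evaluators $la,op_1,ar_1,op_2,ar_2$ (possibly $ea$ itself), $ea$ is defined by (var) $ea(x)=x$; (abs) $ea(\lambda x.B)=\lambda x.B'$ if $la(B)=B'$; (con) $ea(MN)=B'$ if $op_1(M)=\lambda x.B$, $ar_1(N)=N'$, $ea([N'/x]B)=B'$; (neu) $ea(MN)=M''N'$ if $op_1(M)=M'$, $M'$ not an abstraction, $op_2(M')=M''$, $ar_2(N)=N'$. Uniform evaluator $XYZ\in\{I,S\}^3$: $op_1=ea$, $op_2=\mathrm{id}$, and $la$, $ar_1$, $ar_2$ equal to $ea$ itself when the corresponding letter $X$, $Y$, $Z$ is $S$ and to $\mathrm{id}$ when it is $I$. Thus $III$ is call-by-name and $SII$ is head spine. A strategy $st_2$ absorbs $st_1$ iff $st_2\circ st_1=st_2$. *)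

From Stdlib Require Import Arith.

Inductive term : Type :=
| Var : nat -> term
| Lam : term -> term
| App : term -> term -> term.

Fixpoint lift (c : nat) (t : term) : term :=
  match t with
  | Var n => if n <? c then Var n else Var (S n)
  | Lam b => Lam (lift (S c) b)
  | App a b => App (lift c a) (lift c b)
  end.

Fixpoint subst_at (k : nat) (N : term) (t : term) : term :=
  match t with
  | Var n => if n <? k then Var n
             else if n =? k then Nat.iter k (lift 0) N
             else Var (pred n)
  | Lam b => Lam (subst_at (S k) N b)
  | App a b => App (subst_at k N a) (subst_at k N b)
  end.

(* [N/x]B where B is the body of \x.B : capture-avoiding substitution *)
Definition subst (B N : term) : term := subst_at 0 N B.

Definition is_abs (t : term) : Prop :=
  match t with Lam _ => True | _ => False end.

(* Uniform evaluator XYZ, with X,Y,Z in {I,S} encoded as bools (true = S):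
   la = ea if X else id, ar1 = ea if Y else id, ar2 = ea if Z else id,
   op1 = ea, op2 = id.  [ev X Y Z M N] means ea(M) = N (big-step relation;
   the evaluator is undefined where no finite derivation exists). *)
Inductive ev (X Y Z : bool) : term -> term -> Prop :=
| ev_var : forall n, ev X Y Z (Var n) (Var n)
| ev_abs_S : forall B B', X = true -> ev X Y Z B B' -> ev X Y Z (Lam B) (Lam B')
| ev_abs_I : forall B, X = false -> ev X Y Z (Lam B) (Lam B)
| ev_con_S : forall M N B N' B', Y = true ->
    ev X Y Z M (Lam B) -> ev X Y Z N N' -> ev X Y Z (subst B N') B' ->
    ev X Y Z (App M N) B'
| ev_con_I : forall M N B B', Y = false ->
    ev X Y Z M (Lam B) -> ev X Y Z (subst B N) B' ->
    ev X Y Z (App M N) B'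
| ev_neu_S : forall M N M' N', Z = true ->
    ev X Y Z M M' -> ~ is_abs M' -> ev X Y Z N N' ->
    ev X Y Z (App M N) (App M' N')
| ev_neu_I : forall M N M', Z = false ->
    ev X Y Z M M' -> ~ is_abs M' ->
    ev X Y Z (App M N) (App M' N).

Definition III := ev false false false.
Definition IIS := ev false false true.
Definition SII := ev true false false.

Definition absorbs (st2 st1 : term -> term -> Prop) : Prop :=
  forall M R, (exists M', st1 M M' /\ st2 M' R) <-> st2 M R.

From Stdlib Require Import Arith Lia.

(* IIS on the call-by-name value of M redoes nothing: that value is a weak
   head normal form, whose head IIS leaves alone, so a direct induction on the
   derivations suffices.  For SII the key fact is that SII M R holds exactly when
   M head-reduces to the head normal form R, while III M M' holds when M
   weak-head-reduces to the weak head normal form M'.  Weak head steps are head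
   steps and head reduction is deterministic, so M and III(M) lie on the same
   head reduction path.  The hard half of the characterisation of SII is by
   induction on the length of the path: evaluating (\x.C) Q needs the head
   normal form of C, which exists and is reached in no more steps because head
   reduction commutes with substitution. *)

Lemma IIS_lam_III M M' B : III M M' -> IIS M' (Lam B) -> M' = Lam B.
Proof.
  unfold III, IIS; intros H; revert B.
  induction H; intros B0 HB; try discriminate.
  - inversion HB.
  - now inversion HB; subst.
  - now apply IHev2.
  - inversion HB; subst; try discriminate.
    match goal with Hl : ev _ _ _ M' (Lam _) |- _ => apply IHev in Hl end.
    subst; simpl in *; contradiction.
Qed.

Lemma IIS_after_III M M' R : III M M' -> IIS M' R -> IIS M R.
Proof.
  unfold III, IIS; intros H; revert R.
  induction H; intros R HR; try discriminate.
  - exact HR.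
  - exact HR.
  - eapply ev_con_I; [reflexivity | |].
    + apply IHev1, ev_abs_I; reflexivity.
    + exact (IHev2 _ HR).
  - inversion HR; subst; try discriminate.
    + eapply ev_con_I; [reflexivity | apply IHev; eassumption | eassumption].
    + eapply ev_neu_S; [reflexivity | apply IHev; eassumption | assumption | assumption].
Qed.

Lemma IIS_factor_III M R : IIS M R -> exists M', III M M' /\ IIS M' R.
Proof.
  unfold III, IIS; intros H; induction H; try discriminate.
  - exists (Var n); split; constructor.
  - exists (Lam B); split; apply ev_abs_I; reflexivity.
  - destruct IHev1 as [P [HP HPB]].
    rewrite (IIS_lam_III _ _ _ HP HPB) in HP.
    destruct IHev2 as [M2 [HM2 HM2R]].
    exists M2; split; [eapply ev_con_I; eauto | exact HM2R].
  - destruct IHev1 as [P [HP HPM']].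
    assert (Hna : ~ is_abs P).
    { intros Ha; destruct P; try contradiction.
      inversion HPM'; subst; try discriminate; contradiction. }
    exists (App P N); split.
    + eapply ev_neu_I; eauto.
    + eapply ev_neu_S; eauto.
Qed.

Lemma absorbs_IIS_III : absorbs IIS III.
Proof.
  intros M R; split.
  - intros [M' [HM' HR]]; exact (IIS_after_III _ _ _ HM' HR).
  - apply IIS_factor_III.
Qed.

(** * De Bruijn substitution *)

Ltac index_cases :=
  repeat (cbn -[Nat.eqb Nat.ltb Nat.iter]; match goal with
  | |- context [?a <? ?b] => destruct (Nat.ltb_spec a b)
  | |- context [?a =? ?b] => destruct (Nat.eqb_spec a b) end);
  cbn -[Nat.eqb Nat.ltb Nat.iter];
  try (exfalso; lia); try reflexivity; try (f_equal; lia).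

Lemma lift_lift t i c : i <= c -> lift (S c) (lift i t) = lift i (lift c t).
Proof.
  revert i c; induction t; intros i c Hic; simpl.
  - index_cases.
  - f_equal; apply IHt; lia.
  - f_equal; auto.
Qed.

Lemma lift_iter_lift k c N : c <= k ->
  lift c (Nat.iter k (lift 0) N) = Nat.iter (S k) (lift 0) N.
Proof.
  revert c; induction k; intros c Hc.
  - now replace c with 0 by lia.
  - destruct c; [reflexivity |].
    change (Nat.iter (S k) (lift 0) N) with (lift 0 (Nat.iter k (lift 0) N)).
    rewrite lift_lift, IHk by lia; reflexivity.
Qed.

Lemma subst_at_lift t j X : subst_at j X (lift j t) = t.
Proof.
  revert j; induction t; intros j; simpl.
  - index_cases.
  - f_equal; apply IHt.
  - f_equal; auto.
Qed.

Lemma subst_at_lift_comm t c k N : c <= k ->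
  subst_at (S k) N (lift c t) = lift c (subst_at k N t).
Proof.
  revert c k; induction t; intros c k Hc; simpl.
  - destruct (Nat.ltb_spec n c); [index_cases |].
    simpl; destruct (Nat.ltb_spec n k); [index_cases |].
    destruct (Nat.eqb_spec n k); [subst | index_cases].
    index_cases; symmetry; apply lift_iter_lift; lia.
  - f_equal; apply IHt; lia.
  - f_equal; auto.
Qed.

Lemma subst_at_iter_lift j k N M :
  subst_at (j + k) N (Nat.iter j (lift 0) M) = Nat.iter j (lift 0) (subst_at k N M).
Proof.
  induction j; [reflexivity |].
  change (Nat.iter (S j) (lift 0) M) with (lift 0 (Nat.iter j (lift 0) M)).
  simpl Nat.add; rewrite subst_at_lift_comm, IHj by lia; reflexivity.
Qed.

Lemma subst_at_subst_at B j k N M :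
  subst_at (j + k) N (subst_at j M B)
  = subst_at j (subst_at k N M) (subst_at (S (j + k)) N B).
Proof.
  revert j; induction B; intros j; simpl.
  - destruct (Nat.ltb_spec n j); [index_cases |].
    destruct (Nat.eqb_spec n j).
    + subst; destruct (Nat.ltb_spec j (S (j + k))); [| lia]; simpl.
      rewrite Nat.ltb_irrefl, Nat.eqb_refl; apply subst_at_iter_lift.
    + destruct (Nat.ltb_spec n (S (j + k))); [index_cases |].
      destruct (Nat.eqb_spec n (S (j + k))); [subst | index_cases].
      index_cases.
      change (lift 0 (Nat.iter (j + k) (lift 0) N)) with (Nat.iter (S (j + k)) (lift 0) N).
      rewrite <- (lift_iter_lift (j + k) j N) by lia.
      symmetry; apply subst_at_lift.
  - f_equal; apply (IHB (S j)).
  - f_equal; auto.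
Qed.

(** * Counted reduction paths *)

Inductive nsteps {A : Type} (r : A -> A -> Prop) : nat -> A -> A -> Prop :=
| nsteps_refl x : nsteps r 0 x x
| nsteps_step n x y z : r x y -> nsteps r n y z -> nsteps r (S n) x z.

Definition normal {A : Type} (r : A -> A -> Prop) (x : A) : Prop := forall y, ~ r x y.

Section Nsteps.

Variables (A : Type) (r : A -> A -> Prop).

Hypothesis r_det : forall x y y', r x y -> r x y' -> y = y'.
Hypothesis r_progress : forall x, normal r x \/ exists y, r x y.

Lemma nsteps_trans a b x y z : nsteps r a x y -> nsteps r b y z -> nsteps r (a + b) x z.
Proof. induction 1; intros; simpl; [assumption | econstructor; eauto]. Qed.

Lemma nsteps_map (B : Type) (r' : B -> B -> Prop) (f : A -> B) n x y :
  (forall u v, r u v -> r' (f u) (f v)) -> nsteps r n x y -> nsteps r' n (f x) (f y).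
Proof. intros Hf; induction 1; econstructor; eauto. Qed.

Lemma nsteps_det_prefix a b x y z :
  nsteps r a x z -> nsteps r b x y -> b <= a -> nsteps r (a - b) y z.
Proof.
  intros H; revert b y; induction H as [x | a x x1 z Hx1 Hx1z IH]; intros b y Hy Hb.
  - replace b with 0 in * by lia; inversion Hy; constructor.
  - inversion Hy as [| b' ? x1' ? Hx1' Hx1'y]; subst; [econstructor; eauto |].
    rewrite (r_det _ _ _ Hx1 Hx1') in IH; apply IH; [exact Hx1'y | lia].
Qed.

(* By determinism the path from [f x] follows the image of the path from [x]. *)
Lemma nsteps_normal_reflect (f : A -> A) n x z :
  (forall u v, r u v -> r (f u) (f v)) ->
  nsteps r n (f x) z -> normal r z ->
  exists j y, j <= n /\ nsteps r j x y /\ normal r y.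
Proof.
  intros Hf; revert x; induction n; intros x Hx Hz;
    destruct (r_progress x) as [Hnx | [x1 Hx1]].
  - exists 0, x; repeat split; [lia | constructor | assumption].
  - inversion Hx; subst; exfalso; exact (Hz _ (Hf _ _ Hx1)).
  - exists 0, x; repeat split; [lia | constructor | assumption].
  - inversion Hx as [| ? ? fx1 ? Hfx1 Hfx1z]; subst.
    rewrite (r_det _ _ _ Hfx1 (Hf _ _ Hx1)) in Hfx1z.
    destruct (IHn _ Hfx1z Hz) as [j [y [Hj [Hx1y Hy]]]].
    exists (S j), y; repeat split; [lia | econstructor; eauto | exact Hy].
Qed.

Lemma nsteps_sub_normal (r' : A -> A -> Prop) n x z :
  (forall u v, r' u v -> r u v) -> (forall u, normal r' u \/ exists v, r' u v) ->
  nsteps r n x z -> normal r z ->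
  exists y k m, nsteps r' k x y /\ normal r' y /\ nsteps r m y z.
Proof.
  intros Hincl Hprog' H Hz; induction H as [x | n x x2 z Hx2 Hx2z IH];
    destruct (Hprog' x) as [Hnx | [x1 Hx1]].
  - exists x, 0, 0; repeat split; [constructor | exact Hnx | constructor].
  - exfalso; exact (Hz _ (Hincl _ _ Hx1)).
  - exists x, 0, (S n); repeat split; [constructor | exact Hnx | econstructor; eauto].
  - rewrite <- (r_det _ _ _ Hx2 (Hincl _ _ Hx1)) in Hx1.
    destruct (IH Hz) as [y [k [m [Hk [Hy Hm]]]]].
    exists y, (S k), m; repeat split; [econstructor; eauto | exact Hy | exact Hm].
Qed.

End Nsteps.

Arguments nsteps_trans {A r a b x y z}.
Arguments nsteps_map {A r B r'} f {n x y}.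

(** * Head and weak head reduction *)

Inductive hr : term -> term -> Prop :=
| hr_beta B N : hr (App (Lam B) N) (subst B N)
| hr_app P P' N : hr P P' -> ~ is_abs P -> hr (App P N) (App P' N)
| hr_lam B B' : hr B B' -> hr (Lam B) (Lam B').

Inductive wh : term -> term -> Prop :=
| wh_beta B N : wh (App (Lam B) N) (subst B N)
| wh_app P P' N : wh P P' -> ~ is_abs P -> wh (App P N) (App P' N).

Notation hrn := (nsteps hr).
Notation whn := (nsteps wh).
Notation hnf := (normal hr).
Notation whnf := (normal wh).

Lemma hr_det M X Y : hr M X -> hr M Y -> X = Y.
Proof.
  intros H; revert Y; induction H; intros Y HY; inversion HY; subst;
    simpl in *; try contradiction; f_equal; auto.
Qed.

Lemma wh_hr M X : wh M X -> hr M X.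
Proof. induction 1; constructor; auto. Qed.

Lemma wh_not_abs M X : wh M X -> ~ is_abs M.
Proof. now destruct 1. Qed.

Lemma hnf_var n : hnf (Var n).
Proof. intros X H; inversion H. Qed.

Lemma hnf_lam B : hnf (Lam B) <-> hnf B.
Proof.
  split; intros H X HX.
  - exact (H _ (hr_lam _ _ HX)).
  - inversion HX; subst; exact (H _ H1).
Qed.

Lemma hnf_app P Q : hnf (App P Q) <-> hnf P /\ ~ is_abs P.
Proof.
  assert (Hna : hnf (App P Q) -> ~ is_abs P).
  { intros H Ha; destruct P; try contradiction; exact (H _ (hr_beta _ _)). }
  split.
  - intros H; split; [intros X HX; exact (H _ (hr_app _ _ Q HX (Hna H))) | exact (Hna H)].
  - intros [H Ha] X HX; inversion HX as [B N | P0 P' N HP |]; subst;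
      [exact (Ha I) | exact (H _ HP)].
Qed.

Lemma whnf_app P Q : whnf (App P Q) <-> whnf P /\ ~ is_abs P.
Proof.
  assert (Hna : whnf (App P Q) -> ~ is_abs P).
  { intros H Ha; destruct P; try contradiction; exact (H _ (wh_beta _ _)). }
  split.
  - intros H; split; [intros X HX; exact (H _ (wh_app _ _ Q HX (Hna H))) | exact (Hna H)].
  - intros [H Ha] X HX; inversion HX as [B N | P0 P' N HP]; subst;
      [exact (Ha I) | exact (H _ HP)].
Qed.

Lemma hr_progress M : hnf M \/ exists M1, hr M M1.
Proof.
  induction M as [n | B IHB | P IHP Q _].
  - left; apply hnf_var.
  - destruct IHB as [H | [B1 H]]; [left; now apply hnf_lam | right; eexists; exact (hr_lam _ _ H)].
  - destruct P as [n | B | P1 P2]; [| right; eexists; apply hr_beta |];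
      (destruct IHP as [H | [P' H]];
       [left; now apply hnf_app | right; eexists; apply hr_app; [exact H | now simpl]]).
Qed.

Lemma wh_progress M : whnf M \/ exists M1, wh M M1.
Proof.
  induction M as [n | B _ | P IHP Q _]; try (left; intros X H; inversion H; fail).
  destruct P as [n | B | P1 P2]; [| right; eexists; apply wh_beta |];
    (destruct IHP as [H | [P' H]];
     [left; now apply whnf_app | right; eexists; apply wh_app; [exact H | now simpl]]).
Qed.

Lemma hr_subst_at B B' k N : hr B B' -> hr (subst_at k N B) (subst_at k N B').
Proof.
  intros H; revert k; induction H as [C Q | |]; intros k; simpl.
  - unfold subst; rewrite (subst_at_subst_at C 0 k N Q : subst_at k N _ = _); apply hr_beta.
  - apply hr_app; [apply IHhr |].
    destruct P; simpl; [inversion H | assumption | tauto].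
  - apply hr_lam, IHhr.
Qed.

Lemma hrn_lam n B B' : hrn n B B' -> hrn n (Lam B) (Lam B').
Proof. apply nsteps_map, hr_lam. Qed.

Lemma hrn_subst n B B' N : hrn n B B' -> hrn n (subst B N) (subst B' N).
Proof. apply (nsteps_map (fun C => subst C N)); intros u v; apply hr_subst_at. Qed.

Lemma hrn_lam_inv n C X : hrn n (Lam C) X -> exists D, X = Lam D /\ hrn n C D.
Proof.
  revert C; induction n; intros C H; inversion H; subst.
  - eexists; split; [reflexivity | constructor].
  - inversion H1; subst; destruct (IHn _ H2) as [D [-> HD]].
    exists D; split; [reflexivity | econstructor; eauto].
Qed.

Lemma hrn_app_cong n P P' Q : hrn n P P' -> ~ is_abs P' -> hrn n (App P Q) (App P' Q).
Proof.
  induction 1 as [| n M M1 M2 H HM]; intros Ha; [constructor |].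
  assert (Hna : ~ is_abs M).
  { intros HM'; destruct M; try contradiction.
    destruct (hrn_lam_inv _ _ _ (nsteps_step _ _ _ _ _ H HM)) as [D [-> _]]; exact (Ha I). }
  econstructor; [apply hr_app; eauto | auto].
Qed.

(* Head-reducing [P Q]: [P] is reduced until it first becomes an abstraction,
   then the redex fires. *)
Lemma hrn_app_lam n P B Q : hrn n P (Lam B) ->
  exists a b B0, hrn a (App P Q) (subst B0 Q) /\ hrn b B0 B.
Proof.
  intros H; remember (Lam B) as L; revert B HeqL.
  induction H as [| n M M1 M2 HM HM1 IH]; intros B0 HL; subst.
  - exists 1, 0, B0; split; econstructor; [apply hr_beta | constructor].
  - destruct M as [k | C | P1 P2]; [inversion HM | |].
    + exists 1, (S n), C; split; [econstructor; [apply hr_beta | constructor] |].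
      destruct (hrn_lam_inv _ _ _ (nsteps_step _ _ _ _ _ HM HM1)) as [D [E HD]].
      now injection E as ->.
    + destruct (IH B0 eq_refl) as [a [b [B1 [H1 H2]]]].
      exists (S a), b, B1; split; [| exact H2].
      econstructor; [apply hr_app; [exact HM | now simpl] | exact H1].
Qed.

Lemma hrn_app_inv n P Q R : hrn n (App P Q) R ->
  (exists P', hrn n P P' /\ R = App P' Q) \/
  (exists m C, m < n /\ hrn m P (Lam C) /\ hrn (n - S m) (subst C Q) R).
Proof.
  revert P; induction n; intros P H; inversion H; subst.
  - left; exists P; split; [constructor | reflexivity].
  - inversion H1; subst.
    + right; exists 0, B; split; [lia |].
      split; [apply nsteps_refl | simpl; rewrite Nat.sub_0_r; exact H2].
    + destruct (IHn _ H2) as [[P'' [G1 G2]] | [m [C [G1 [G2 G3]]]]].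
      * left; exists P''; split; [econstructor; eauto | exact G2].
      * right; exists (S m), C; repeat split; [lia | econstructor; eauto | exact G3].
Qed.

(** * The evaluators as reduction strategies *)

Lemma SII_hrn M R : SII M R -> (exists n, hrn n M R) /\ hnf R.
Proof.
  unfold SII; induction 1 as
    [n | B B' _ _ [[n HB] HB'] | | | M N B B' _ _ [[n1 HM] _] _ [[n2 HN] HR] |
     | M N M' _ _ [[n HM] HM'] Ha]; try discriminate.
  - split; [exists 0; constructor | apply hnf_var].
  - split; [exists n; exact (hrn_lam _ _ _ HB) | now apply hnf_lam].
  - split; [| exact HR].
    destruct (hrn_app_lam _ _ _ N HM) as [a [b [B0 [HMN HB0]]]].
    exists (a + (b + n2)).
    apply (nsteps_trans HMN), (nsteps_trans (hrn_subst _ _ _ N HB0)), HN.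
  - split; [exists n; now apply hrn_app_cong | now apply hnf_app].
Qed.

Lemma hrn_SII n M R : hrn n M R -> hnf R -> SII M R.
Proof.
  unfold SII; revert M R; induction n as [n IHn] using lt_wf_ind.
  intros M; induction M as [k | C IHC | P IHP Q _]; intros R H HR.
  - inversion H; subst; [constructor | inversion H0].
  - destruct (hrn_lam_inv _ _ _ H) as [D [-> HD]].
    apply ev_abs_S; [reflexivity | apply IHC; [exact HD | now apply hnf_lam]].
  - destruct (hrn_app_inv _ _ _ _ H) as [[P' [HP ->]] | [m [C [Hm [HP HC]]]]].
    + apply hnf_app in HR as [HP' Ha].
      eapply ev_neu_I; [reflexivity | exact (IHP _ HP HP') | exact Ha].
    + destruct (nsteps_normal_reflect _ _ hr_det hr_progress (subst_at 0 Q) _ _ _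
                  (fun u v => hr_subst_at u v 0 Q) HC HR) as [j [C' [Hj [HCC' HC']]]].
      eapply ev_con_I with (B := C'); [reflexivity | |].
      * apply (IHn (m + j)); [lia | | now apply hnf_lam].
        exact (nsteps_trans HP (hrn_lam _ _ _ HCC')).
      * apply (IHn (n - S m - j)); [lia | | exact HR].
        exact (nsteps_det_prefix _ _ hr_det _ _ _ _ _ HC (hrn_subst _ _ _ Q HCC') Hj).
Qed.

Lemma SII_iff_hrn M R : SII M R <-> (exists n, hrn n M R) /\ hnf R.
Proof. split; [apply SII_hrn | intros [[n H] HR]; exact (hrn_SII _ _ _ H HR)]. Qed.

Lemma whn_app_cong n P P' Q : whn n P P' -> whn n (App P Q) (App P' Q).
Proof.
  apply (nsteps_map (fun P => App P Q)).
  intros u v H; exact (wh_app _ _ Q H (wh_not_abs _ _ H)).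
Qed.

Lemma whn_hrn n M M' : whn n M M' -> hrn n M M'.
Proof. exact (nsteps_map id wh_hr). Qed.

Lemma III_whn M M' : III M M' -> exists k, whn k M M'.
Proof.
  unfold III; induction 1 as [| | | | M N B B' _ _ [a Ha] _ [b Hb] | | M N M' _ _ [a Ha] _];
    try discriminate; try (exists 0; constructor).
  - exists (a + S b); apply (nsteps_trans (whn_app_cong _ _ _ N Ha)).
    econstructor; [apply wh_beta | exact Hb].
  - exists a; exact (whn_app_cong _ _ _ N Ha).
Qed.

Lemma whnf_III M : whnf M -> III M M.
Proof.
  unfold III; induction M as [n | B _ | P IHP Q _]; intros H.
  - constructor.
  - apply ev_abs_I; reflexivity.
  - apply whnf_app in H as [HP Ha].
    eapply ev_neu_I; [reflexivity | exact (IHP HP) | exact Ha].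
Qed.

Lemma III_wh_expand M M1 R : wh M M1 -> III M1 R -> III M R.
Proof.
  unfold III; intros H; revert R; induction H; intros R HR.
  - eapply ev_con_I; [reflexivity | apply ev_abs_I; reflexivity | exact HR].
  - inversion HR; subst; try discriminate.
    + eapply ev_con_I; eauto.
    + eapply ev_neu_I; eauto.
Qed.

Lemma whn_III k M M' : whn k M M' -> whnf M' -> III M M'.
Proof.
  induction 1 as [M | k M M1 M' HM _ IH]; intros HM'; [now apply whnf_III |].
  exact (III_wh_expand _ _ _ HM (IH HM')).
Qed.

Lemma absorbs_SII_III : absorbs SII III.
Proof.
  intros M R; rewrite SII_iff_hrn; split.
  - intros [M' [HM' HR]]; apply SII_iff_hrn in HR as [[n Hn] HR].
    destruct (III_whn _ _ HM') as [k Hk].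
    split; [exists (k + n); exact (nsteps_trans (whn_hrn _ _ _ Hk) Hn) | exact HR].
  - intros [[n Hn] HR].
    destruct (nsteps_sub_normal _ _ hr_det wh _ _ _ wh_hr wh_progress Hn HR)
      as [M' [k [m [Hk [HM' Hm]]]]].
    exists M'; split; [exact (whn_III _ _ _ Hk HM') |].
    apply SII_iff_hrn; split; [exists m; exact Hm | exact HR].
Qed.

Theorem mainTheorem3 : absorbs IIS III /\ absorbs SII III.
Proof. split; [exact absorbs_IIS_III | exact absorbs_SII_III]. Qed.
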